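(* In the bilevel setting of the context, suppose (A1), (A2), (A3) hold, $(x^*,y^* )$ is a bi-local solution of (BP), and MSCQ for $\Omega_1$ holds at $x^*$. Then $d_x=0$ is an optimal solution of the problem $$\min_{d_x}\ \nabla_xF(x^*,y^* )^Td_x+\nabla_yF(x^*,y^* )^Ty'(x^*;d_x)$$ subject to $\nabla_xH_i(x^*,y^* )^Td_x+\nabla_yH_i(x^*,y^* )^Ty'(x^*;d_x)=0$, $i\in[p]$, and $\nabla_xG_i(x^*,y^* )^Td_x+\nabla_yG_i(x^*,y^* )^Ty'(x^*;d_x)\le0$, $i\in I_G$.
   Context: Bilevel program (BP): $\min F(x,y)$ s.t. $H(x,y)=0$, $G(x,y)\le0$, $y\in S(x)$, $S(x)$ the solution set of $(P_x)$: $\min_yf(x,y)$ s.t. $h(x,y)=0$, $g(x,y)\le0$; on $\mathbb{R}^n\times\mathbb{R}^m$, $F,f$ scalar, $G\to\mathbb{R}^q$, $H\to\mathbb{R}^p$, $g\to\mathbb{R}^s$, $h\to\mathbb{R}^r$; $f,g,h\in C^3$, $F,G,H\in C^2$ around $(x^*,y^* )$. $Y(x)=\{y:h(x,y)=0,g(x,y)\le0\}$, $\Phi=\{(x,y):H=0,G\le0\}$, $I_G=\{i\in[q]:G_i(x^*,y^* )=0\}$, $\mathcal{L}=f+\mu^Th+\xi^Tg$, $\Lambda_{x^*}(y^* )$ = KKT multipliers $(\mu,\xi)$: $\nabla_y\mathcal{L}(x^*;y^*,\mu,\xi)=0$, $h(x^*,y^* )=0$, $0\le\xi\perp g(x^*,y^*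 )\le0$; assume $y^*\in Y(x^* )$, $\Lambda_{x^*}(y^* )\ne\emptyset$; $I_{x^*}(y^* )=\{i:g_i(x^*,y^* )=0\}$. (A1) MFCQ: $\{\nabla_yh_i(x^*,y^* )\}$ lin. independent and some $d_y$ has $\mathcal{J}_yh(x^*,y^* )d_y=0$, $\nabla_yg_i(x^*,y^* )^Td_y<0$, $i\in I_{x^*}(y^* )$. (A2) SSOSC: for all $(\mu^*,\xi^* )\in\Lambda_{x^*}(y^* )$, $d_y^T\nabla^2_{yy}\mathcal{L}(x^*;y^*,\mu^*,\xi^* )d_y>0$ for $d_y\ne0$ with $\mathcal{J}_yh(x^*,y^* )d_y=0$, $\nabla_yg_i(x^*,y^* )^Td_y=0$ when $g_i(x^*,y^* )=0,\xi^*_i>0$. (A3) CRCQ: near $(x^*,y^* )$, for all $I\subseteq I_{x^*}(y^* )$, $J\subseteq[r]$, $\{\nabla_yh_i(x,y)\}_{J}\cup\{\nabla_yg_i(x,y)\}_I$ has constant rank. Under (A1)–(A3) there is a locally Lipschitz, directionally differentiable map $y(\cdot)$ on a ball $\mathbb{B}_\delta(x^* )$, $y(x^* )=y^*$, with $y(x)$ the unique local solution of $(P_x)$ in a ball $\mathbb{B}_\varepsilon(y^* )$; $y'(x;d)=\lim_{t\downarrow0}(y(x+td)-y(x))/t$. $\Omega_1=\{x:H(x,y(x))=0,G(x,y(x))\le0\}$. MSCQ for $\Omega_1$ at $x^*$: $\mathrm{dist}(x,\Omega_1)\le\kappa\,\mathrm{dist}((H(x,y(x)),G(x,y(x))),\{0\}^p\times\mathbb{R}^q_-)$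 for $x$ near $x^*$, some $\kappa>0$. Bi-local solution: $(x^*,y^* )\in\Phi$ with $\delta,\varepsilon>0$ such that $y^*$ minimizes $f(x^*,\cdot)$ on $Y(x^* )\cap\mathbb{B}_\varepsilon(y^* )$ and $F(x^*,y^* )\le F(x,y)$ whenever $x\in\mathbb{B}_\delta(x^* )$, $(x,y)\in\Phi$, $y\in\arg\min\{f(x,y'):y'\in Y(x)\cap\mathbb{B}_\varepsilon(y^* )\}$. *)

From HB Require Import structures.
From mathcomp Require Import all_boot all_order all_algebra.
From mathcomp Require Import all_classical all_reals all_analysis.
Set Implicit Arguments. Unset Strict Implicit. Unset Printing Implicit Defensive.
Import Order.TTheory GRing.Theory Num.Theory.
Import numFieldNormedType.Exports.
Local Open Scope classical_set_scope.
Local Open Scope ring_scope.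

Section BilevelDefs.
Variable R : realType.

Definition enorm k (v : 'rV[R]_k) : R := Num.sqrt (\sum_(i < k) v 0 i ^+ 2).
Definition cball k (c : 'rV[R]_k) (rad : R) : set 'rV[R]_k :=
  [set z | enorm (z - c) <= rad].
Definition setdist k (v : 'rV[R]_k) (A : set 'rV[R]_k) : R :=
  inf [set enorm (v - a) | a in A].

Definition dot k (u v : 'rV[R]_k) : R := \sum_(i < k) u 0 i * v 0 i.

Definition evec N (i : 'I_N) : 'rV[R]_N := delta_mx 0 i.
Definition pd N (f : 'rV[R]_N -> R) (i : 'I_N) (z : 'rV[R]_N) : R :=
  derive f z (evec i).
Fixpoint iterD N (s : seq 'I_N) (f : 'rV[R]_N -> R) : 'rV[R]_N -> R :=
  match s with
  | [::] => f
  | i :: s' => pd (iterD s' f) i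
  end.

Definition Ck N (k : nat) (f : 'rV[R]_N -> R) (z0 : 'rV[R]_N) : Prop :=
  exists rho : R, 0 < rho /\
    forall s : seq 'I_N, (size s <= k)%N ->
      {within cball z0 rho, continuous (iterD s f)} /\
      ((size s < k)%N -> forall z, cball z0 rho z ->
          forall i, derivable (iterD s f) z (evec i)).

Definition unc n m (F : 'rV[R]_n -> 'rV[R]_m -> R) : 'rV[R]_(n + m) -> R :=
  fun z => F (lsubmx z) (rsubmx z).
Definition comp n m k (G : 'rV[R]_n -> 'rV[R]_m -> 'rV[R]_k) (i : 'I_k)
  : 'rV[R]_n -> 'rV[R]_m -> R := fun x y => G x y 0 i.

Definition CkF n m k (F : 'rV[R]_n -> 'rV[R]_m -> R) x y :=
  Ck k (unc F) (row_mx x y).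
Definition CkV n m l k (G : 'rV[R]_n -> 'rV[R]_m -> 'rV[R]_l) x y :=
  forall i, CkF k (comp G i) x y.

Definition gradx n m (F : 'rV[R]_n -> 'rV[R]_m -> R) x y : 'rV[R]_n :=
  \row_(i < n) pd (unc F) (lshift m i) (row_mx x y).
Definition grady n m (F : 'rV[R]_n -> 'rV[R]_m -> R) x y : 'rV[R]_m :=
  \row_(j < m) pd (unc F) (rshift n j) (row_mx x y).
Definition hessyy n m (F : 'rV[R]_n -> 'rV[R]_m -> R) x y : 'M[R]_m :=
  \matrix_(i < m, j < m) iterD [:: rshift n i; rshift n j] (unc F) (row_mx x y).

Variables (n m p q r s : nat).
Notation fun_s := ('rV[R]_n -> 'rV[R]_m -> R).
Notation fun_v k := ('rV[R]_n -> 'rV[R]_m -> 'rV[R]_k).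

Definition lag (f : fun_s) (h : fun_v r) (g : fun_v s)
  (mu : 'rV[R]_r) (xi : 'rV[R]_s) : fun_s :=
  fun x y => f x y + \sum_(i < r) mu 0 i * h x y 0 i + \sum_(i < s) xi 0 i * g x y 0 i.

Definition Yset (h : fun_v r) (g : fun_v s) (x : 'rV[R]_n) : set 'rV[R]_m :=
  fun y => (forall i, h x y 0 i = 0) /\ (forall i, g x y 0 i <= 0).

Definition Phi (H : fun_v p) (G : fun_v q) (x : 'rV[R]_n) (y : 'rV[R]_m) : Prop :=
  (forall i, H x y 0 i = 0) /\ (forall i, G x y 0 i <= 0).

Definition KKTmult (f : fun_s) (h : fun_v r) (g : fun_v s) x y
  : set ('rV[R]_r * 'rV[R]_s) :=
  fun mx => grady (lag f h g mx.1 mx.2) x y = 0 /\ (forall i, h x y 0 i = 0) /\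
            (forall i, 0 <= mx.2 0 i /\ g x y 0 i <= 0 /\ mx.2 0 i * g x y 0 i = 0).

Definition MFCQ (h : fun_v r) (g : fun_v s) x y : Prop :=
  row_free (\matrix_(i < r) grady (comp h i) x y) /\
  exists dy : 'rV[R]_m,
    (forall i, dot (grady (comp h i) x y) dy = 0) /\
    (forall i, g x y 0 i = 0 -> dot (grady (comp g i) x y) dy < 0).

Definition SSOSC (f : fun_s) (h : fun_v r) (g : fun_v s) x y : Prop :=
  forall mu xi, KKTmult f h g x y (mu, xi) ->
  forall dy : 'rV[R]_m, dy != 0 ->
    (forall i, dot (grady (comp h i) x y) dy = 0) ->
    (forall i, g x y 0 i = 0 -> 0 < xi 0 i -> dot (grady (comp g i) x y) dy = 0) ->
    0 < (dy *m hessyy (lag f h g mu xi) x y *m dy^T) 0 0.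

(* the family {grad_y h_j}_{j in J} u {grad_y g_i}_{i in I}, as the rows of a
   matrix (rows outside J, I are zero, which does not affect the rank) *)
Definition famCR (h : fun_v r) (g : fun_v s) (J : {set 'I_r}) (I : {set 'I_s}) x y
  : 'M[R]_(r + s, m) :=
  col_mx (\matrix_(j < r) (if j \in J then grady (comp h j) x y else 0))
         (\matrix_(i < s) (if i \in I then grady (comp g i) x y else 0)).

Definition CRCQ (h : fun_v r) (g : fun_v s) xs ys : Prop :=
  exists rho : R, 0 < rho /\
    forall (I : {set 'I_s}) (J : {set 'I_r}),
      I \subset [set i | g xs ys 0 i == 0] ->
      forall x y, cball xs rho x -> cball ys rho y ->
        \rank (famCR h g J I x y) = \rank (famCR h g J I xs ys).

Definition ydir (ym : 'rV[R]_n -> 'rV[R]_m) (x d : 'rV[R]_n) : 'rV[R]_m :=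
  lim ((fun t : R => t^-1 *: (ym (x + t *: d) - ym x)) @ 0^'+).

Definition sol_map (f : fun_s) (h : fun_v r) (g : fun_v s) xs ys
  (delta eps : R) (ym : 'rV[R]_n -> 'rV[R]_m) : Prop :=
  0 < delta /\ 0 < eps /\ ym xs = ys /\
  (forall x0, enorm (x0 - xs) < delta -> exists rho L : R, 0 < rho /\
     forall x1 x2, enorm (x1 - x0) <= rho -> enorm (x2 - x0) <= rho ->
       enorm (ym x1 - ym x2) <= L * enorm (x1 - x2)) /\
  (forall x, enorm (x - xs) < delta -> forall d : 'rV[R]_n,
     cvg ((fun t : R => t^-1 *: (ym (x + t *: d) - ym x)) @ 0^'+)) /\
  (forall x, cball xs delta x ->
     (Yset h g x `&` cball ys eps) (ym x) /\
     (forall y, (Yset h g x `&` cball ys eps) y -> f x (ym x) <= f x y) /\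
     (forall y, (Yset h g x `&` cball ys eps) y ->
        (forall y', (Yset h g x `&` cball ys eps) y' -> f x y <= f x y') ->
        y = ym x)).

Definition Omega1 (H : fun_v p) (G : fun_v q) (ym : 'rV[R]_n -> 'rV[R]_m)
  : set 'rV[R]_n := [set x | Phi H G x (ym x)].

Definition coneK : set 'rV[R]_(p + q) :=
  fun v => lsubmx v = 0 /\ forall i, rsubmx v 0 i <= 0.

Definition MSCQ (H : fun_v p) (G : fun_v q) (ym : 'rV[R]_n -> 'rV[R]_m) xs : Prop :=
  exists kappa rho : R, 0 < kappa /\ 0 < rho /\
    forall x, cball xs rho x ->
      setdist x (Omega1 H G ym) <=
        kappa * setdist (row_mx (H x (ym x)) (G x (ym x))) coneK.

Definition bilocal (F : fun_s) (H : fun_v p) (G : fun_v q)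
  (f : fun_s) (h : fun_v r) (g : fun_v s) xs ys (delta eps : R) : Prop :=
  0 < delta /\ 0 < eps /\ Phi H G xs ys /\
  (Yset h g xs `&` cball ys eps) ys /\
  (forall y, (Yset h g xs `&` cball ys eps) y -> f xs ys <= f xs y) /\
  (forall x y, cball xs delta x -> Phi H G x y ->
     (Yset h g x `&` cball ys eps) y ->
     (forall y', (Yset h g x `&` cball ys eps) y' -> f x y <= f x y') ->
     F xs ys <= F x y).

Definition lin_obj (F : fun_s) (ym : 'rV[R]_n -> 'rV[R]_m) xs ys (d : 'rV[R]_n) : R :=
  dot (gradx F xs ys) d + dot (grady F xs ys) (ydir ym xs d).
Definition lin_feas (H : fun_v p) (G : fun_v q) (ym : 'rV[R]_n -> 'rV[R]_m) xs ys
  (d : 'rV[R]_n) : Prop :=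
  (forall i, dot (gradx (comp H i) xs ys) d + dot (grady (comp H i) xs ys) (ydir ym xs d) = 0) /\
  (forall i, G xs ys 0 i = 0 ->
     dot (gradx (comp G i) xs ys) d + dot (grady (comp G i) xs ys) (ydir ym xs d) <= 0).

End BilevelDefs.

From Pilot Require Import Defs.
From HB Require Import structures.
From mathcomp Require Import all_boot all_order all_algebra.
From mathcomp Require Import all_classical all_reals all_analysis.
From mathcomp Require Import lra ring.
Set Implicit Arguments. Unset Strict Implicit. Unset Printing Implicit Defensive.
Import Order.TTheory GRing.Theory Num.Theory Num.Def.
Import numFieldNormedType.Exports.
Local Open Scope classical_set_scope.
Local Open Scope ring_scope.

(* Suppose a direction d feasible for the linearized problem had negative value A.
   Along x_t = xs + t d we have y(x_t) = ys + t y'(xs; d) + o(t), and C^1 functions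
   are strictly differentiable at (xs, ys) (mean value theorem along a path that
   changes one coordinate at a time).  Hence H and G violate the constraints of
   Omega_1 at x_t only by o(t), while F(x_t, y(x_t)) = F(xs, ys) + t A + o(t).
   MSCQ yields a point of Omega_1 within o(t) of x_t; as x |-> F(x, y(x)) is
   Lipschitz near xs, its value there is still F(xs, ys) + t A + o(t) < F(xs, ys).
   This contradicts bi-local optimality, which makes xs a local minimizer of
   F(x, y(x)) on Omega_1.  (A1)-(A3) only serve to produce the solution map, whose
   properties enter through [sol_map]. *)

Section LineDerivative.
Variables (R : realType) (N : nat) (phi : 'rV[R]_N -> R) (w e : 'rV[R]_N).

Lemma derivable_line (u : R) :
  derivable phi (w + u *: e) e ->
  derivable (fun t : R => phi (w + t *: e)) u 1 /\
  'D_1 (fun t : R => phi (w + t *: e)) u = 'D_e phi (w + u *: e).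
Proof.
rewrite /derivable /derive.
suff -> : (fun h : R => h^-1 *: (((fun t => phi (w + t *: e)) \o shift u) (h *: 1)
                                  - phi (w + u *: e)))
  = (fun h : R => h^-1 *: ((phi \o shift (w + u *: e)) (h *: e) - phi (w + u *: e))) by [].
by apply/funext => h /=; rewrite /shift /= scaler1 scalerDl addrCA.
Qed.

Lemma mvt_line (a : R) :
  (forall u, u \in `[minr 0 a, maxr 0 a] -> derivable phi (w + u *: e) e) ->
  exists2 c, c \in `[minr 0 a, maxr 0 a] &
    phi (w + a *: e) - phi w = a * 'D_e phi (w + c *: e).
Proof.
set g := fun t : R => phi (w + t *: e).
have mvt a1 a2 : a1 <= a2 ->
    (forall u, u \in `[a1, a2] -> derivable phi (w + u *: e) e) ->
    exists2 c, c \in `[a1, a2] & g a2 - g a1 = (a2 - a1) * 'D_e phi (w + c *: e).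
  move=> a12 Hd.
  have gD u : u \in `[a1, a2] -> is_derive u 1 g ('D_e phi (w + u *: e)).
    by move=> /Hd /derivable_line [? <-]; exact: DeriveDef.
  have gC : {within `[a1, a2], continuous g}.
    by apply: derivable_within_continuous => u /gD [].
  have [c ca E] := MVT_segment a12 (fun u ua => gD u (subset_itv_oo_cc ua)) gC.
  by exists c; rewrite // E mulrC.
have gw : phi w = g 0 by rewrite /g scale0r addr0.
rewrite gw; case: (leP 0 a) => a0 Hd.
  by have [c ? ->] := mvt 0 a a0 Hd; exists c; rewrite ?subr0.
have [c ? E] := mvt a 0 (ltW a0) Hd; exists c => //.
by apply: oppr_inj; rewrite opprB E sub0r mulNr.
Qed.

End LineDerivative.

Section Norms.
Variables (R : realType) (k : nat).
Implicit Types (u v : 'rV[R]_k).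

Lemma entry_le_norm v i : `|v 0 i| <= `|v|.
Proof.
rewrite [leRHS]/Num.Def.normr /= mx_normrE.
exact: le_trans (le_bigmax _ _ (0, i)).
Qed.

Lemma norm_le_entries v (e : R) : 0 <= e -> (forall i, `|v 0 i| <= e) -> `|v| <= e.
Proof.
move=> e0 ve; rewrite [leLHS]/Num.Def.normr /= mx_normrE.
by apply: bigmax_le => // -[a b] _ /=; rewrite (ord1 a).
Qed.

Lemma enorm_ge0 v : 0 <= enorm v.
Proof. exact: sqrtr_ge0. Qed.

Lemma norm_le_enorm v : `|v| <= enorm v.
Proof.
apply: norm_le_entries (enorm_ge0 v) _ => i.
rewrite /enorm -sqrtr_sqr ler_wsqrtr //.
by rewrite (bigD1 i) //= lerDl; apply: sumr_ge0 => j _; exact: sqr_ge0.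
Qed.

Lemma enorm_le_norm v : enorm v <= k%:R * `|v|.
Proof.
rewrite /enorm -[leRHS]ger0_norm ?mulr_ge0 // -sqrtr_sqr ler_wsqrtr //.
apply: (@le_trans _ _ (\sum_(i < k) `|v| ^+ 2)).
  apply: ler_sum => i _; rewrite -real_normK ?num_real //.
  by rewrite lerXn2r ?nnegrE ?entry_le_norm.
rewrite sumr_const card_ord -[_ *+ k]mulr_natr exprMn [leRHS]mulrC.
apply: ler_wpM2l; first exact: sqr_ge0.
rewrite -natrX ler_nat; case: (k) => // k'.
by rewrite expnS leq_pmulr // expn_gt0.
Qed.

Lemma enormZ (t : R) v : enorm (t *: v) = `|t| * enorm v.
Proof.
rewrite /enorm (eq_bigr (fun i => t ^+ 2 * v 0 i ^+ 2)) => [|i _]; last first.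
  by rewrite mxE exprMn.
by rewrite -mulr_sumr sqrtrM ?sqr_ge0 // sqrtr_sqr.
Qed.

Lemma enorm0 : enorm (0 : 'rV[R]_k) = 0.
Proof. by rewrite /enorm big1 ?sqrtr0 // => i _; rewrite mxE expr0n. Qed.

Lemma enorm_distC u v : enorm (u - v) = enorm (v - u).
Proof. by rewrite -opprB -scaleN1r enormZ normrN1 mul1r. Qed.

Lemma enormD_le u v : enorm (u + v) <= k%:R * (enorm u + enorm v).
Proof.
apply: le_trans (enorm_le_norm _) _; apply: ler_wpM2l => //.
by apply: le_trans (ler_normD _ _) _; apply: lerD; exact: norm_le_enorm.
Qed.

End Norms.

Lemma norm_row_mx (R : realType) a b (u : 'rV[R]_a) (w : 'rV[R]_b) :
  `|row_mx u w| <= `|u| + `|w|.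
Proof.
apply: norm_le_entries; first exact: addr_ge0.
move=> i; have [j ->|j ->] := split_ordP i.
  by rewrite row_mxEl; apply: le_trans (entry_le_norm u j) _; rewrite lerDl.
by rewrite row_mxEr; apply: le_trans (entry_le_norm w j) _; rewrite lerDr.
Qed.

Section Dot.
Variables (R : realType) (k : nat).
Implicit Types (c u v : 'rV[R]_k).

Lemma dotB c u v : dot c (u - v) = dot c u - dot c v.
Proof. by rewrite /dot -sumrB; apply: eq_bigr => i _; rewrite !mxE mulrBr. Qed.

Lemma dotZ c v (t : R) : dot c (t *: v) = t * dot c v.
Proof. by rewrite /dot mulr_sumr; apply: eq_bigr => i _; rewrite !mxE mulrCA. Qed.

Lemma dot0 c : dot c 0 = 0.
Proof. by rewrite /dot big1 // => i _; rewrite mxE mulr0. Qed.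

Definition norm1 c : R := \sum_(i < k) `|c 0 i|.

Lemma norm1_ge0 c : 0 <= norm1 c.
Proof. exact: sumr_ge0. Qed.

Lemma dot_le c v : `|dot c v| <= norm1 c * `|v|.
Proof.
rewrite /dot /norm1 mulr_suml; apply: le_trans (ler_norm_sum _ _ _) _.
by apply: ler_sum => i _; rewrite normrM ler_wpM2l ?entry_le_norm.
Qed.

End Dot.

Lemma nbhs0p_mul_le (R : realType) (C r : R) : 0 < r -> \forall t \near 0^'+, t * C <= r.
Proof.
move=> r0; have Cr : 0 < r / (`|C| + 1) by rewrite divr_gt0 // ltr_wpDl.
near=> t.
have t0 : 0 < t by near: t; exact: nbhs_right_gt.
have : t < r / (`|C| + 1) by near: t; exact: nbhs_right_lt.
rewrite ltr_pdivlMr ?ltr_wpDl // => tC.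
apply: le_trans (_ : t * `|C| <= r); first by rewrite ler_pM2l // ler_norm.
have : 0 <= `|C| by []. nra.
Unshelve. all: by end_near.
Qed.

Section StrictGradient.
Variables (R : realType) (N : nat).
Implicit Types (phi : 'rV[R]_N -> R) (c : 'rV[R]_N).

Definition gradv phi (z0 : 'rV[R]_N) : 'rV[R]_N := \row_j pd phi j z0.

Definition is_strict_grad phi (z0 : 'rV[R]_N) c := forall eps : R, 0 < eps ->
  exists2 del : R, 0 < del & forall z1 z2, `|z1 - z0| <= del -> `|z2 - z0| <= del ->
    `|phi z1 - phi z2 - dot c (z1 - z2)| <= eps * `|z1 - z2|.

Definition partials_close phi (z0 : 'rV[R]_N) (del eps : R) :=
  forall z, `|z - z0| <= del ->
  forall j, derivable phi z (evec R j) /\ `|pd phi j z - pd phi j z0| <= eps.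

Lemma norm_coord_segment (P c : 'rV[R]_N) j (a th del : R) :
  `|P - c| <= del -> `|P + a *: evec R j - c| <= del ->
  th \in `[minr 0 a, maxr 0 a] -> `|P + th *: evec R j - c| <= del.
Proof.
move=> hP hPa; rewrite in_itv /= => /andP[th1 th2].
apply: norm_le_entries => [|i]; first exact: le_trans hP.
have := le_trans (entry_le_norm _ i) hP; have := le_trans (entry_le_norm _ i) hPa.
rewrite !mxE eqxx /=; case: eqP => _; last by rewrite !mulr0 !addr0.
rewrite !mulr1 !ler_norml => /andP[? ?] /andP[? ?].
by move: th1 th2; case: (leP 0 a) => _ ? ?; apply/andP; split; lra.
Qed.

Lemma coord_increment_le phi (z0 : 'rV[R]_N) (del eps : R) P j (a : R) :
  partials_close phi z0 del eps ->
  `|P - z0| <= del -> `|P + a *: evec R j - z0| <= del ->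
  `|phi (P + a *: evec R j) - phi P - pd phi j z0 * a| <= eps * `|a|.
Proof.
move=> close hP hPa.
have [c ca ->] : exists2 c, c \in `[minr 0 a, maxr 0 a] &
    phi (P + a *: evec R j) - phi P = a * 'D_(evec R j) phi (P + c *: evec R j).
  apply: mvt_line => u ua.
  exact: (close _ (norm_coord_segment hP hPa ua) j).1.
rewrite mulrC -mulrBl normrM ler_wpM2r //.
exact: (close _ (norm_coord_segment hP hPa ca) j).2.
Qed.

Definition pathpt (z1 z2 : 'rV[R]_N) (j : nat) : 'rV[R]_N :=
  \row_i (if (i < j)%N then z1 0 i else z2 0 i).

Lemma pathptS (z1 z2 : 'rV[R]_N) (j : 'I_N) :
  pathpt z1 z2 j.+1 = pathpt z1 z2 j + (z1 0 j - z2 0 j) *: evec R j.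
Proof.
apply/rowP => i; rewrite !mxE eqxx /= ltnS.
case: (eqVneq i j) => [->|ij]; first by rewrite leqnn ltnn mulr1 addrC subrK.
by rewrite mulr0 addr0 leq_eqVlt -[(i == j :> nat)]/(i == j) (negbTE ij).
Qed.

Lemma pathpt_norm_le (z0 z1 z2 : 'rV[R]_N) (del : R) j :
  `|z1 - z0| <= del -> `|z2 - z0| <= del -> `|pathpt z1 z2 j - z0| <= del.
Proof.
move=> h1 h2; apply: norm_le_entries => [|i]; first exact: le_trans h1.
have := le_trans (entry_le_norm _ i) h1; have := le_trans (entry_le_norm _ i) h2.
by rewrite !mxE; case: ifP.
Qed.

Lemma partials_close_strict_grad phi (z0 : 'rV[R]_N) :
  (forall eps, 0 < eps -> exists2 del, 0 < del & partials_close phi z0 del eps) ->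
  is_strict_grad phi z0 (gradv phi z0).
Proof.
move=> close eps eps0.
have e0 : 0 < eps / N.+1%:R by rewrite divr_gt0.
have [del del0 cl] := close _ e0; exists del => // z1 z2 h1 h2.
set P := pathpt z1 z2.
have -> : phi z1 - phi z2 - dot (gradv phi z0) (z1 - z2) =
    \sum_(j < N) (phi (P j.+1) - phi (P j) - pd phi j z0 * (z1 0 j - z2 0 j)).
  rewrite sumrB -(big_mkord xpredT (fun j => phi (P j.+1) - phi (P j))).
  rewrite telescope_sumr // /P; congr (phi _ - phi _ - _).
  - by apply/rowP => i; rewrite mxE ltn_ord.
  - by apply/rowP => i; rewrite mxE.
  - by apply: eq_bigr => j _; rewrite !mxE.
apply: le_trans (ler_norm_sum _ _ _) _.
apply: (@le_trans _ _ (\sum_(j < N) eps / N.+1%:R * `|z1 - z2|)).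
  apply: ler_sum => j _; rewrite /P pathptS.
  apply: le_trans (coord_increment_le cl (pathpt_norm_le j h1 h2) _) _.
    by rewrite -pathptS; exact: pathpt_norm_le.
  by rewrite ler_wpM2l ?(ltW e0) //; have := entry_le_norm (z1 - z2) j; rewrite !mxE.
rewrite sumr_const card_ord -mulrnAl ler_wpM2r // -mulr_natr mulrAC.
by rewrite ler_pdivrMr ?ltr0Sn // ler_pM2l // ler_nat.
Qed.

Lemma Ck_partials_close k phi (z0 : 'rV[R]_N) : (0 < k)%N -> Ck k phi z0 ->
  forall eps, 0 < eps -> exists2 del, 0 < del & partials_close phi z0 del eps.
Proof.
move=> k0 [rho [rho0 Hk]] eps eps0.
have z0in : cball z0 rho z0 by rewrite /cball /= subrr enorm0 ltW.
have : \forall z \near within (cball z0 rho) (nbhs z0),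
    forall j, `|pd phi j z0 - pd phi j z| <= eps.
  apply: filter_forall => j.
  have := (subspace_continuousP _ _).1 (Hk [:: j] k0).1 z0 z0in.
  by move/cvgrPdist_le => /(_ eps eps0).
rewrite /within /= => /nbhs_normP [d0 d00 near_z0].
exists (minr (d0 / 2) (rho / N.+1%:R)); first by rewrite lt_min !divr_gt0.
move=> z; rewrite le_min => /andP[zd zr].
have zc : cball z0 rho z.
  apply: le_trans (enorm_le_norm _) _.
  apply: le_trans (ler_wpM2l (ler0n _ N) zr) _.
  by rewrite mulrCA ger_pMr // ler_pdivrMr ?ltr0Sn // mul1r ler_nat.
move=> j; split; first exact: ((Hk [::] (leq0n k)).2 k0 z zc j).
rewrite distrC; apply: near_z0 zc j; rewrite /= distrC.
by apply: le_lt_trans zd _; rewrite ltr_pdivrMr // ltr_pMr // ltr1n.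
Qed.

Lemma Ck_strict_grad k phi (z0 : 'rV[R]_N) : (0 < k)%N -> Ck k phi z0 ->
  is_strict_grad phi z0 (gradv phi z0).
Proof. by move=> k0 /(Ck_partials_close k0); exact: partials_close_strict_grad. Qed.

Lemma strict_grad_lipschitz phi (z0 : 'rV[R]_N) c : is_strict_grad phi z0 c ->
  exists2 del, 0 < del & forall z1 z2, `|z1 - z0| <= del -> `|z2 - z0| <= del ->
    `|phi z1 - phi z2| <= (norm1 c + 1) * `|z1 - z2|.
Proof.
move=> sg; have [del del0 H] := sg 1 ltr01; exists del => // z1 z2 h1 h2.
have := H z1 z2 h1 h2; have := dot_le c (z1 - z2).
have := ler_normD (phi z1 - phi z2 - dot c (z1 - z2)) (dot c (z1 - z2)).
rewrite subrK mulrDl !mul1r; lra.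
Qed.

Lemma strict_grad_along_curve phi (z0 : 'rV[R]_N) c (z : R -> 'rV[R]_N) w :
  is_strict_grad phi z0 c -> (fun t => t^-1 *: (z t - z0)) @ 0^'+ --> w ->
  forall eps, 0 < eps -> \forall t \near 0^'+,
    `|phi (z t) - phi z0 - t * dot c w| <= t * eps.
Proof.
move=> sg zw eps eps0.
set W := `|w| + 1; have W0 : 0 < W by rewrite ltr_wpDl.
set n1 := norm1 c + 1; have n10 : 0 < n1 by rewrite ltr_wpDl ?norm1_ge0.
have e1 : 0 < eps / (2 * W) by rewrite divr_gt0 // mulr_gt0.
have [del del0 Hd] := sg _ e1.
have e0 : 0 < minr 1 (eps / (2 * n1)) by rewrite lt_min ltr01 divr_gt0 ?mulr_gt0.
near=> t.
have t0 : 0 < t by near: t; exact: nbhs_right_gt.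
have : `|t^-1 *: (z t - z0) - w| <= minr 1 (eps / (2 * n1)).
  by rewrite distrC; near: t; exact: (cvgrPdist_le _ _).1 zw _ e0.
set u := t^-1 *: (z t - z0); rewrite le_min => /andP[uw1 uw2].
have ztu : z t - z0 = t *: u by rewrite scalerA mulfV ?gt_eqF // scale1r.
have zd : `|z t - z0| <= t * W.
  rewrite ztu normrZ gtr0_norm // ler_pM2l //.
  by have := ler_normD w (u - w); rewrite addrC subrK /W; lra.
have tW : t * W <= del by near: t; exact: nbhs0p_mul_le.
have z00 : `|z0 - z0| <= del by rewrite subrr normr0 ltW.
have lin := Hd _ _ (le_trans zd tW) z00.
have -> : phi (z t) - phi z0 - t * dot c w =
    (phi (z t) - phi z0 - dot c (z t - z0)) + t * dot c (u - w).
  by rewrite ztu dotZ dotB mulrBr addrA subrK.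
apply: le_trans (ler_normD _ _) _.
have h1 : eps / (2 * W) * `|z t - z0| <= t * eps / 2.
  have -> : t * eps / 2 = eps / (2 * W) * (t * W) by field; rewrite gt_eqF.
  by rewrite ler_wpM2l // ltW.
have h2 : `|t * dot c (u - w)| <= t * eps / 2.
  rewrite normrM gtr0_norm // -mulrA ler_pM2l //.
  apply: le_trans (dot_le _ _) _; apply: le_trans (_ : n1 * `|u - w| <= _).
    by rewrite ler_wpM2r // lerDl.
  have -> : eps / 2 = n1 * (eps / (2 * n1)) by field; rewrite gt_eqF.
  by rewrite ler_wpM2l // ltW.
by have := le_trans lin h1; lra.
Unshelve. all: by end_near.
Qed.

End StrictGradient.

Section SetDistance.
Variables (R : realType) (k : nat).
Implicit Types (v a : 'rV[R]_k) (A : set 'rV[R]_k).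

Lemma setdist_le v A a : A a -> setdist v A <= enorm (v - a).
Proof.
move=> Aa; apply: ge_inf; last by exists a.
by exists 0 => _ [b _ <-]; exact: enorm_ge0.
Qed.

Lemma setdist_approx v A (eps : R) : A !=set0 -> 0 < eps ->
  exists2 a, A a & enorm (v - a) < setdist v A + eps.
Proof.
move=> [a0 Aa0] eps0.
have infA : has_inf [set enorm (v - a) | a in A].
  split; first by exists (enorm (v - a0)), a0.
  by exists 0 => _ [b _ <-]; exact: enorm_ge0.
by have [_ [a Aa <-] ?] := inf_adherent eps0 infA; exists a.
Qed.

End SetDistance.

Lemma unc_row (R : realType) n m (phi : 'rV[R]_n -> 'rV[R]_m -> R) x y :
  unc phi (row_mx x y) = phi x y.
Proof. by rewrite /unc row_mxKl row_mxKr. Qed.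

Lemma dot_gradv_row_mx (R : realType) n m (phi : 'rV[R]_n -> 'rV[R]_m -> R) x y a b :
  dot (gradv (unc phi) (row_mx x y)) (row_mx a b) =
  dot (gradx phi x y) a + dot (grady phi x y) b.
Proof.
rewrite /dot big_split_ord; congr (_ + _); apply: eq_bigr => i _.
  by rewrite row_mxEl !mxE.
by rewrite row_mxEr !mxE.
Qed.

Lemma ydir0 (R : realType) n m (ym : 'rV[R]_n -> 'rV[R]_m) x : ydir ym x 0 = 0.
Proof.
rewrite /ydir (_ : (fun t : R => _) = fun=> 0) ?lim_cst //.
by apply/funext => t; rewrite scaler0 addr0 subrr scaler0.
Qed.

Section ReducedProblem.
Variables (R : realType) (n m p q k : nat).
Variables (F : 'rV[R]_n -> 'rV[R]_m -> R) (H : 'rV[R]_n -> 'rV[R]_m -> 'rV[R]_p)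
  (G : 'rV[R]_n -> 'rV[R]_m -> 'rV[R]_q).
Variables (ym : 'rV[R]_n -> 'rV[R]_m) (xs : 'rV[R]_n) (ys : 'rV[R]_m) (d : 'rV[R]_n).
Hypotheses (k_gt0 : (0 < k)%N)
  (HF : CkF k F xs ys) (HH : CkV k H xs ys) (HG : CkV k G xs ys).
Hypotheses (ymS : ym xs = ys)
  (ym_dir : cvg ((fun t : R => t^-1 *: (ym (xs + t *: d) - ym xs)) @ 0^'+)).

Let xt (t : R) := xs + t *: d.

Lemma solution_curve_quotient :
  (fun t => t^-1 *: (row_mx (xt t) (ym (xt t)) - row_mx xs ys)) @ 0^'+
    --> row_mx d (ydir ym xs d).
Proof.
have ymv : (fun t : R => t^-1 *: (ym (xt t) - ys)) @ 0^'+ --> ydir ym xs d.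
  by rewrite -ymS.
apply/cvgrPdist_le => e e0; near=> t.
have t0 : 0 < t by near: t; exact: nbhs_right_gt.
rewrite opp_row_mx add_row_mx.
have -> : xt t - xs = t *: d by rewrite /xt addrC addKr.
rewrite scale_row_mx scalerA mulVf ?gt_eqF // scale1r.
rewrite opp_row_mx add_row_mx subrr.
apply: le_trans (norm_row_mx _ _) _; rewrite normr0 add0r.
by near: t; exact: (cvgrPdist_le _ _).1 ymv _ e0.
Unshelve. all: by end_near.
Qed.

Lemma solution_curve_expansion (phi : 'rV[R]_n -> 'rV[R]_m -> R) :
  CkF k phi xs ys -> forall eps, 0 < eps -> \forall t \near 0^'+,
    `|phi (xt t) (ym (xt t)) - phi xs ys
      - t * (dot (gradx phi xs ys) d + dot (grady phi xs ys) (ydir ym xs d))|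
      <= t * eps.
Proof.
move=> /(Ck_strict_grad k_gt0) sg eps eps0.
have := strict_grad_along_curve sg solution_curve_quotient eps0.
by apply: filterS => t; rewrite !unc_row dot_gradv_row_mx.
Qed.

Hypothesis ym_lip : exists rho L : R, 0 < rho /\ forall x1 x2,
  enorm (x1 - xs) <= rho -> enorm (x2 - xs) <= rho ->
  enorm (ym x1 - ym x2) <= L * enorm (x1 - x2).

Lemma reduced_lipschitz : exists2 rho : R, 0 < rho & exists M : R, forall x1 x2,
  enorm (x1 - xs) <= rho -> enorm (x2 - xs) <= rho ->
  `|F x1 (ym x1) - F x2 (ym x2)| <= M * enorm (x1 - x2).
Proof.
have [rL [L [rL0 HL]]] := ym_lip.
have [dF dF0 HFl] := strict_grad_lipschitz (Ck_strict_grad k_gt0 HF).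
set L1 := 1 + `|L|; have L10 : 0 < L1 by rewrite ltr_pwDl.
have graph x1 x2 : enorm (x1 - xs) <= rL -> enorm (x2 - xs) <= rL ->
    `|row_mx x1 (ym x1) - row_mx x2 (ym x2)| <= L1 * enorm (x1 - x2).
  move=> h1 h2; rewrite opp_row_mx add_row_mx; apply: le_trans (norm_row_mx _ _) _.
  rewrite mulrDl mul1r lerD ?norm_le_enorm //; apply: le_trans (norm_le_enorm _) _.
  by apply: le_trans (HL _ _ h1 h2) _; rewrite ler_wpM2r ?enorm_ge0 ?ler_norm.
have near_xs x : enorm (x - xs) <= rL -> enorm (x - xs) <= dF / L1 ->
    `|row_mx x (ym x) - row_mx xs ys| <= dF.
  move=> hL hF; rewrite -ymS; apply: le_trans (graph _ _ hL _) _.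
    by rewrite subrr enorm0 ltW.
  by rewrite mulrC -ler_pdivlMr.
exists (minr rL (dF / L1)); first by rewrite lt_min rL0 divr_gt0.
exists ((norm1 (gradv (unc F) (row_mx xs ys)) + 1) * L1) => x1 x2.
rewrite !le_min => /andP[h1L h1F] /andP[h2L h2F].
have := HFl _ _ (near_xs _ h1L h1F) (near_xs _ h2L h2F); rewrite !unc_row => hF.
apply: le_trans hF _; rewrite -mulrA ler_wpM2l ?addr_ge0 ?norm1_ge0 //.
exact: graph.
Qed.

Hypotheses (PhiS : Phi H G xs ys) (d_feas : lin_feas H G ym xs ys d).

Lemma constraint_violation_small eps : 0 < eps -> \forall t \near 0^'+,
  setdist (row_mx (H (xt t) (ym (xt t))) (G (xt t) (ym (xt t)))) (@coneK R p q)
    <= t * eps.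
Proof.
move=> eps0; set e := eps / (p + q).+1%:R; have e0 : 0 < e by rewrite divr_gt0.
have [H0 G0] := PhiS; have [linH linG] := d_feas.
have Hsmall : \forall t \near 0^'+, forall i, `|H (xt t) (ym (xt t)) 0 i| <= t * e.
  apply: filter_forall => i; apply: filterS (solution_curve_expansion (HH i) e0) => t.
  by rewrite (linH i) mulr0 subr0 /Defs.comp (H0 i) subr0.
have Gsmall i : \forall t \near 0^'+, G (xt t) (ym (xt t)) 0 i <= t * e.
  move: (solution_curve_expansion (HG i) e0) (linG i); rewrite /Defs.comp.
  set lin := _ + _ => ex lini.
  have [Gneg|Gnn] := ltP (G xs ys 0 i) 0.
    have small : \forall t \near 0^'+, t * (`|lin| + e) <= - G xs ys 0 i.
      by apply: nbhs0p_mul_le; rewrite oppr_gt0.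
    near=> t; have t0 : 0 < t by near: t; exact: nbhs_right_gt.
    have : `|G (xt t) (ym (xt t)) 0 i - G xs ys 0 i - t * lin| <= t * e by near: t.
    have : t * (`|lin| + e) <= - G xs ys 0 i by near: t.
    have : t * lin <= t * `|lin| by rewrite ler_pM2l // ler_norm.
    have : 0 <= t * e by rewrite mulr_ge0 ?ltW.
    rewrite mulrDr ler_norml; lra.
  have G00 : G xs ys 0 i = 0 by apply/eqP; rewrite eq_le G0 Gnn.
  near=> t; have t0 : 0 < t by near: t; exact: nbhs_right_gt.
  have : `|G (xt t) (ym (xt t)) 0 i - G xs ys 0 i - t * lin| <= t * e by near: t.
  have : t * lin <= 0 by rewrite pmulr_rle0 // lini.
  rewrite ler_norml; lra.
near=> t; have t0 : 0 < t by near: t; exact: nbhs_right_gt.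
have hH : forall i, `|H (xt t) (ym (xt t)) 0 i| <= t * e by near: t.
have hG : forall i, G (xt t) (ym (xt t)) 0 i <= t * e.
  by near: t; exact: filter_forall.
set a := row_mx (0 : 'rV[R]_p) (\row_i minr (G (xt t) (ym (xt t)) 0 i) 0).
have Ka : coneK a.
  split; first by rewrite row_mxKl.
  by move=> i; rewrite row_mxKr mxE ge_min lexx orbT.
apply: le_trans (setdist_le _ Ka) _; apply: le_trans (enorm_le_norm _) _.
apply: le_trans (_ : (p + q)%:R * (t * e) <= _).
  rewrite ler_wpM2l // opp_row_mx add_row_mx subr0.
  apply: norm_le_entries => [|i]; first by rewrite mulr_ge0 ?ltW.
  have [j ->|j ->] := split_ordP i; first by rewrite row_mxEl.
  rewrite row_mxEr !mxE; have [Gle|Ggt] := leP (G (xt t) (ym (xt t)) 0 j) 0.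
    by rewrite subrr normr0 mulr_ge0 ?ltW.
  by rewrite subr0 gtr0_norm.
rewrite mulrCA ler_pM2l // /e mulrCA ger_pMr //.
by rewrite ler_pdivrMr ?ltr0Sn // mul1r ler_nat.
Unshelve. all: by end_near.
Qed.

Hypothesis mscq : MSCQ H G ym xs.

Lemma restoration eps : 0 < eps -> \forall t \near 0^'+,
  exists2 x, Omega1 H G ym x & enorm (x - xt t) <= t * eps.
Proof.
move=> eps0; have [kap [rho [kap0 [rho0 Hms]]]] := mscq.
have Onz : Omega1 H G ym !=set0 by exists xs; rewrite /Omega1 /= ymS.
have e0 : 0 < eps / (2 * kap) by rewrite divr_gt0 // mulr_gt0.
near=> t; have t0 : 0 < t by near: t; exact: nbhs_right_gt.
have xtin : cball xs rho (xt t).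
  rewrite /cball /= /xt addrC addKr enormZ gtr0_norm //.
  by near: t; exact: nbhs0p_mul_le.
have viol : setdist (row_mx (H (xt t) (ym (xt t))) (G (xt t) (ym (xt t)))) (@coneK R p q)
    <= t * (eps / (2 * kap)) by near: t; exact: constraint_violation_small.
have te0 : 0 < t * eps / 2 by rewrite divr_gt0 // mulr_gt0.
have [x Ox hx] := setdist_approx (xt t) Onz te0.
exists x => //; rewrite enorm_distC.
have := le_trans (Hms _ xtin) (ler_wpM2l (ltW kap0) viol).
have -> : kap * (t * (eps / (2 * kap))) = t * eps / 2 by field; rewrite gt_eqF.
lra.
Unshelve. all: by end_near.
Qed.

Hypothesis obj_neg : lin_obj F ym xs ys d < 0.

Lemma reduced_descent r : 0 < r ->
  exists x, [/\ Omega1 H G ym x, enorm (x - xs) <= r & F x (ym x) < F xs ys].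
Proof.
move=> r0; move: obj_neg; rewrite /lin_obj; set A := _ + _ => A0.
have [rho rho0 [M HM]] := reduced_lipschitz.
set C := 1 + `|M|; have C0 : 0 < C by rewrite ltr_pwDl.
set eps := - A / (2 * C); have eps0 : 0 < eps by rewrite divr_gt0 ?oppr_gt0 ?mulr_gt0.
set rad := minr r rho; have rad0 : 0 < rad by rewrite lt_min r0.
have : \forall t \near 0^'+, [/\ 0 < t,
    exists2 x, Omega1 H G ym x & enorm (x - xt t) <= t * eps,
    `|F (xt t) (ym (xt t)) - F xs ys - t * A| <= t * eps,
    t * enorm d <= rad & t * (n%:R * (eps + enorm d)) <= rad].
  near=> t; split.
  - by near: t; exact: nbhs_right_gt.
  - by near: t; exact: restoration.
  - by near: t; exact: solution_curve_expansion.
  - by near: t; exact: nbhs0p_mul_le.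
  - by near: t; exact: nbhs0p_mul_le.
move=> /filter_ex [t [t0 [x Ox hx] hF htd htx]].
have dxt : xt t - xs = t *: d by rewrite /xt addrC addKr.
have hxt : enorm (xt t - xs) <= rad by rewrite dxt enormZ gtr0_norm.
have hxs : enorm (x - xs) <= rad.
  have -> : x - xs = (x - xt t) + (xt t - xs) by rewrite addrA subrK.
  apply: le_trans (enormD_le _ _) (le_trans _ htx).
  rewrite mulrCA ler_wpM2l // mulrDr lerD // dxt enormZ gtr0_norm //.
move: hxt hxs; rewrite !le_min => /andP[_ hxt] /andP[hxr hxs].
exists x; split => //.
have := le_trans (HM _ _ hxs hxt) (ler_wpM2r (enorm_ge0 _) (ler_norm M)).
move/le_trans/(_ (ler_wpM2l (normr_ge0 M) hx)) => hFx.
have : `|M| * (t * eps) + t * eps = t * (- A / 2).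
  by rewrite /eps /C; field; rewrite gt_eqF.
have : t * A < 0 by rewrite pmulr_rlt0.
move: hF hFx; rewrite !ler_norml; lra.
Unshelve. all: by end_near.
Qed.

End ReducedProblem.

Lemma bilocal_reduced_local_min (R : realType) n m p q r s
    (F : 'rV[R]_n -> 'rV[R]_m -> R) (H : 'rV[R]_n -> 'rV[R]_m -> 'rV[R]_p)
    (G : 'rV[R]_n -> 'rV[R]_m -> 'rV[R]_q)
    (f : 'rV[R]_n -> 'rV[R]_m -> R) (h : 'rV[R]_n -> 'rV[R]_m -> 'rV[R]_r)
    (g : 'rV[R]_n -> 'rV[R]_m -> 'rV[R]_s) xs ys (ym : 'rV[R]_n -> 'rV[R]_m)
    (db eb dm em : R) :
  bilocal F H G f h g xs ys db eb -> sol_map f h g xs ys dm em ym -> eb <= em ->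
  exists2 rad : R, 0 < rad & forall x, Omega1 H G ym x -> enorm (x - xs) <= rad ->
    F xs ys <= F x (ym x).
Proof.
move=> [db0 [eb0 [_ [_ [_ opt]]]]] [dm0 [_ [ymS [lip [_ sol]]]]] ebm.
have [rL [L [rL0 HL]]] : exists rL L : R, 0 < rL /\ forall x1 x2,
    enorm (x1 - xs) <= rL -> enorm (x2 - xs) <= rL ->
    enorm (ym x1 - ym x2) <= L * enorm (x1 - x2).
  by apply: lip; rewrite subrr enorm0.
set L1 := 1 + `|L|; have L10 : 0 < L1 by rewrite ltr_pwDl.
exists (minr (minr db dm) (minr rL (eb / L1))) => [|x Ox].
  by rewrite !lt_min db0 dm0 rL0 divr_gt0.
rewrite !le_min => /andP[/andP[xdb xdm] /andP[xrL xeb]].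
have [[Yx _] [minx _]] := sol x xdm.
have yeb : cball ys eb (ym x).
  rewrite /cball /= -ymS; apply: le_trans (HL _ _ xrL _) _.
    by rewrite subrr enorm0 ltW.
  apply: le_trans (ler_wpM2r (enorm_ge0 _) (ler_norm L)) _.
  apply: le_trans (_ : L1 * enorm (x - xs) <= _).
    by rewrite ler_wpM2r ?enorm_ge0 // /L1 lerDr.
  by rewrite mulrC -ler_pdivlMr.
apply: opt xdb Ox (conj Yx yeb) _ => y' [Yy' cy'].
by apply: minx; split => //; exact: le_trans cy' ebm.
Qed.

Theorem theorem4p1 (R : realType) (n m p q r s : nat)
  (F : 'rV[R]_n -> 'rV[R]_m -> R) (H : 'rV[R]_n -> 'rV[R]_m -> 'rV[R]_p)
  (G : 'rV[R]_n -> 'rV[R]_m -> 'rV[R]_q)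
  (f : 'rV[R]_n -> 'rV[R]_m -> R) (h : 'rV[R]_n -> 'rV[R]_m -> 'rV[R]_r)
  (g : 'rV[R]_n -> 'rV[R]_m -> 'rV[R]_s)
  (xs : 'rV[R]_n) (ys : 'rV[R]_m)
  (* smoothness *)
  (Hf : CkF 3 f xs ys) (Hg : CkV 3 g xs ys) (Hh : CkV 3 h xs ys)
  (HF : CkF 2 F xs ys) (HG : CkV 2 G xs ys) (HH : CkV 2 H xs ys)
  (* standing assumptions *)
  (Hys : Yset h g xs ys) (HLam : KKTmult f h g xs ys !=set0)
  (* (A1)-(A3) *)
  (A1 : MFCQ h g xs ys) (A2 : SSOSC f h g xs ys) (A3 : CRCQ h g xs ys)
  (* the solution map y(.) *)
  (ym : 'rV[R]_n -> 'rV[R]_m) (dm em : R) (Hym : sol_map f h g xs ys dm em ym)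
  (* bi-local solution *)
  (db eb : R) (Hbl : bilocal F H G f h g xs ys db eb) (Heb : eb <= em)
  (* MSCQ for Omega_1 *)
  (Hmscq : MSCQ H G ym xs) :
  lin_feas H G ym xs ys 0 /\
  forall d, lin_feas H G ym xs ys d -> lin_obj F ym xs ys 0 <= lin_obj F ym xs ys d.
Proof.
have [dm0 [_ [ymS [lip [ddir _]]]]] := Hym.
have [_ [_ [PhiS _]]] := Hbl.
have xs0 : enorm (xs - xs) < dm by rewrite subrr enorm0.
split; first by rewrite /lin_feas ydir0; split => i; rewrite !dot0 ?addr0.
move=> d dfeas; rewrite {1}/lin_obj ydir0 !dot0 addr0 leNgt; apply/negP => obj_neg.
have [rad rad0 locmin] := bilocal_reduced_local_min Hbl Hym Heb.
have [x [Ox xrad Fx]] := reduced_descent (isT : (0 < 2)%N) HF HH HG ymS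
  (ddir xs xs0 d) (lip xs xs0) PhiS dfeas Hmscq obj_neg rad0.
by have := locmin x Ox xrad; rewrite leNgt Fx.
Qed.
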